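(* Assume (A1)–(A3). If $m_2<0$, then for every $k\ge0$ there exist $C>0$, $\theta>0$ and $\tilde\theta>0$ such that for all $i\ge k_0$ and $j,\ell\in\mathbb Z$, \[\mathbb P_{(i,j)}\bigl(Y_1(T_1^k)=\ell\bigr)\le C\exp(-\theta(\ell-j)-\tilde\theta i),\] where $T_1^k=\inf\{n>0: X_1(n)\le\max(k_0-1,k)\}$.
   Context: Let $\mathbb N=\{0,1,2,\dots\}$ and fix an integer $k_0\ge1$. Let $\mu$, $\mu'_j$ ($0\le j<k_0$), $\mu''_i$ ($0\le i<k_0$), $\mu_{ij}$ ($0\le i,j<k_0$) be probability measures on $\mathbb Z^2$. The random walk $Z=(X(n),Y(n))$ on $\mathbb N^2$ has transition probabilities $p((i,j)\to(i',j'))$ equal to $\mu(i'-i,j'-j)$ if $i,j\ge k_0$; $\mu'_j(i'-i,j'-j)$ if $i\ge k_0$, $0\le j<k_0$; $\mu''_i(i'-i,j'-j)$ if $0\le i<k_0$, $j\ge k_0$; $\mu_{ij}(i'-i,j'-j)$ if $0\le i,j<k_0$. Assumptions: (A1) $\mu(a,b)=0$ if $a<-k_0$ or $b<-k_0$; $\mu'_j(a,b)=0$ if $a<-k_0$ or $b<-j$; $\mu''_i(a,b)=0$ if $b<-k_0$ or $a<-i$; $\mu_{ij}(a,b)=0$ if $a<-i$ or $b<-j$. (A2) There are $\delta,\gamma,C>0$ with $\sup_{(i,j)\in\mathbb N^2}\mathbb E_{(i,j)}[\exp(\delta(X(1)-i)+\gamma(Y(1)-j))]\le C$. (A3) $Z_0,Z_1,Z_2,Z$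 are irreducible on their state spaces. $Z_0$: random walk on $\mathbb Z^2$ with increment law $\mu$; $m_2=\sum b\mu(a,b)$. $Z_1=(X_1,Y_1)$: Markov chain on $\mathbb N\times\mathbb Z$ with transitions $\mu(i'-i,j'-j)$ from $(i,j)$ if $i\ge k_0$ and $\mu''_i(i'-i,j'-j)$ if $0\le i<k_0$; $\mathbb P_{(i,j)}$ is its law from $(i,j)$. $Z_2$: Markov chain on $\mathbb Z\times\mathbb N$ with transitions $\mu$ if $j\ge k_0$ and $\mu'_j$ if $0\le j<k_0$. *)

From HB Require Import structures.
From mathcomp Require Import all_boot all_order all_algebra.
From mathcomp Require Import all_classical all_reals.
From mathcomp Require Import all_analysis.
From Stdlib Require Import Relations.
Set Implicit Arguments. Unset Strict Implicit. Unset Printing Implicit Defensive.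
Import Order.TTheory GRing.Theory Num.Theory.
Local Open Scope ring_scope.
Local Open Scope classical_set_scope.

Section Defs.
Variable R : realType.

Definition is_prob (m : int * int -> R) : Prop :=
  (forall x, 0 <= m x) /\ (\esum_(x in [set: int * int]) (m x)%:E = 1%E).

(* second coordinate of the mean: m_2 = sum b mu(a,b)
   (integral = integral of positive part minus integral of negative part) *)
Definition mean2 (mu : int * int -> R) : \bar R :=
  (\esum_(x in [set: int * int]) ((Num.max x.2 0)%:~R * mu x)%:E
   - \esum_(x in [set: int * int]) ((Num.max (- x.2) 0)%:~R * mu x)%:E)%E.

Definition kerZ0 (mu : int * int -> R) (z z' : int * int) : R :=
  mu (z'.1 - z.1, z'.2 - z.2).

Definition kerZ1 (k0 : nat) (mu : int * int -> R) (mu2 : nat -> int * int -> R)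
  (z z' : nat * int) : R :=
  let d := (z'.1%:Z - z.1%:Z, z'.2 - z.2) in
  if (k0 <= z.1)%N then mu d else mu2 z.1 d.

Definition kerZ2 (k0 : nat) (mu : int * int -> R) (mu1 : nat -> int * int -> R)
  (z z' : int * nat) : R :=
  let d := (z'.1 - z.1, z'.2%:Z - z.2%:Z) in
  if (k0 <= z.2)%N then mu d else mu1 z.2 d.

(* Z on N x N; mu1 j = mu'_j, mu2 i = mu''_i, mu12 i j = mu_{ij} *)
Definition kerZ (k0 : nat) (mu : int * int -> R) (mu1 mu2 : nat -> int * int -> R)
  (mu12 : nat -> nat -> int * int -> R) (z z' : nat * nat) : R :=
  let d := (z'.1%:Z - z.1%:Z, z'.2%:Z - z.2%:Z) in
  if (k0 <= z.1)%N then
    (if (k0 <= z.2)%N then mu d else mu1 z.2 d)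
  else
    (if (k0 <= z.2)%N then mu2 z.1 d else mu12 z.1 z.2 d).

Definition irreducible (S : Type) (p : S -> S -> R) : Prop :=
  forall x y : S, clos_refl_trans_1n S (fun a b => 0 < p a b) x y.

(* First-passage decomposition for Z_1 and the set {X_1 <= K}:
   firstpass p K l n z = P_z(T = n+1, Y_1(T) = l) where T = inf{n > 0 : X_1(n) <= K},
   computed as a sum over paths. *)
Fixpoint firstpass (p : nat * int -> nat * int -> R) (K : nat) (l : int) (n : nat)
  (z : nat * int) : \bar R :=
  match n with
  | 0 => \esum_(z' in [set z' : nat * int | (z'.1 <= K)%N /\ z'.2 = l]) (p z z')%:E
  | n'.+1 => \esum_(z' in [set z' : nat * int | (K < z'.1)%N])
               ((p z z')%:E * firstpass p K l n' z')%E
  end.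

Definition hitY (p : nat * int -> nat * int -> R) (K : nat) (l : int) (z : nat * int)
  : \bar R :=
  \esum_(n in [set: nat]) firstpass p K l n z.

End Defs.

From HB Require Import structures.
From mathcomp Require Import all_boot all_order all_algebra.
From mathcomp Require Import all_classical all_reals.
From mathcomp Require Import all_analysis.
From mathcomp Require Import lra ring zify.
Import Order.TTheory GRing.Theory Num.Theory.
Local Open Scope ring_scope.
Local Open Scope classical_set_scope.

(* Since m_2 < 0 and the jumps of mu have exponential moments, a second-order
   expansion gives E[exp(t Y)] < 1 for some small t > 0; since the horizontal
   jumps are bounded below by -k0, a small tilt eta in X keeps
   E[exp(t Y - eta X)] <= 1.  Hence G(x, y) = exp(t (y - l) - eta (x - K)) is
   superharmonic for Z_1 on {x >= k0} and at least 1 on the target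
   {x <= K, y = l}, so it dominates the probability of first entering
   {x <= K} at height l, which is the claimed bound with C = exp(eta K). *)

Section ExpBounds.
Context {R : realType}.

Lemma expR_le_quadratic (x : R) :
  expR x <= 1 + x + x ^+ 2 * expR `|x|.
Proof.
have inv_bound : (1 - x) * expR x <= 1.
  rewrite -[leRHS](expRxMexpNx_1 x) mulrC ler_wpM2l ?expR_ge0 //.
  by have := expR_ge1Dx (- x); lra.
have [x0|x0] := lerP 0 x.
  by rewrite ger0_norm //; nra.
rewrite ltr0_norm //.
have e1 : 1 <= expR (- x) by have := expR_ge1Dx (- x); lra.
have : x ^+ 2 <= x ^+ 2 * expR (- x) by rewrite ler_peMr ?sqr_ge0.
nra.
Qed.

Lemma expR_le_quadratic_moment (g t k v : R) :
  0 < g -> 0 <= t -> t <= g / 2 -> 0 <= k -> - k <= v ->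
  expR (t * v) <= 1 + t * v + t ^+ 2 * (8 / g ^+ 2 * expR (2 * g * k)) * expR (g * v).
Proof.
(* [v^2 <= 8/g^2 e^(g|v|/2)], [t|v| <= g|v|/2] and [|v| <= v + 2k] *)
move=> g0 t0 tg k0 kv.
set w := `|v|; set a := expR (g * w / 2).
have w0 : 0 <= w := normr_ge0 v.
have wv : w ^+ 2 = v ^+ 2 by rewrite real_normK ?num_real.
have w_le : w <= v + 2 * k by rewrite /w; case: (lerP 0 v) => v0;
  [rewrite ger0_norm | rewrite ltr0_norm]; lra.
have w_sqr : w ^+ 2 <= 8 / g ^+ 2 * a.
  have gw0 : 0 <= g * w / 2 by rewrite divr_ge0 ?mulr_ge0 // ltW.
  have h : 1 + (g * w / 2) ^+ 2 / 2 <= a := expR_ge1Dxn 1 gw0.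
  rewrite mulrAC ler_pdivlMr ?exprn_gt0 //; nra.
have ea : expR (t * w) <= a by rewrite ler_expR; nra.
have a_sqr : a * a <= expR (2 * g * k) * expR (g * v).
  by rewrite -!expRD ler_expR; nra.
have := expR_le_quadratic (t * v).
rewrite normrM ger0_norm // -/w exprMn -wv.
have c0 : 0 <= 8 / g ^+ 2 by rewrite divr_ge0 ?sqr_ge0.
have : w ^+ 2 * expR (t * w) <= 8 / g ^+ 2 * (expR (2 * g * k) * expR (g * v)).
  apply: (le_trans (ler_pM (sqr_ge0 _) (expR_ge0 _) w_sqr ea)).
  by rewrite -[_ * a * a]mulrA; exact: ler_wpM2l.
nra.
Qed.

End ExpBounds.

Section EsumNonneg.
Local Open Scope ereal_scope.
Context {R : realType} {T : choiceType}.
Implicit Types (S : set T) (f : T -> \bar R).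

Lemma ge0_esumZl S (r : R) f : (0 <= r)%R -> (forall x, 0 <= f x) ->
  \esum_(x in S) (r%:E * f x) = r%:E * \esum_(x in S) f x.
Proof.
move=> r0 f0; rewrite /esum -ereal_supZl //; last first.
  by apply/set0P; exists 0; exists set0; [exact: fsets_set0|rewrite fsbig_set0].
congr ereal_sup; apply/seteqP; split => x /=.
- by move=> [A SA <-]; exists (\sum_(i \in A) f i); [exists A|rewrite ge0_mule_fsumr].
- by move=> [_ [A SA <-] <-]; exists A => //; rewrite ge0_mule_fsumr.
Qed.

Lemma esum_le_setT S f : (forall x, 0 <= f x) ->
  \esum_(x in S) f x <= \esum_(x in [set: T]) f x.
Proof. by move=> f0; rewrite esum_mkcond; apply: le_esum => x _; case: ifP. Qed.

Lemma esum_setT_supp S f : (forall x, ~ S x -> f x = 0) ->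
  \esum_(x in [set: T]) f x = \esum_(x in S) f x.
Proof.
move=> f0; rewrite [RHS]esum_mkcond; apply: eq_esum => x _.
by case: ifPn => // /negP Sx; rewrite f0 // => /mem_set.
Qed.

Lemma esum_disj_le S1 S2 f : (forall x, 0 <= f x) -> S1 `&` S2 = set0 ->
  \esum_(x in S1) f x + \esum_(x in S2) f x <= \esum_(x in [set: T]) f x.
Proof.
move=> f0 S12; rewrite [X in X + _]esum_mkcond [X in _ + X]esum_mkcond -esumD;
  try by move=> x _; case: ifP.
apply: le_esum => x _; case: ifPn => [/set_mem x1|_]; case: ifPn => [/set_mem x2|_];
  rewrite ?adde0 ?add0e //.
by have : (S1 `&` S2) x by []; rewrite S12.
Qed.

Lemma ge0_esumDZ S (f g : T -> R) (r : R) : (0 <= r)%R ->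
  (forall x, 0 <= f x)%R -> (forall x, 0 <= g x)%R ->
  \esum_(x in S) (f x + r * g x)%:E
  = \esum_(x in S) (f x)%:E + r%:E * \esum_(x in S) (g x)%:E.
Proof.
move=> r0 f0 g0; under eq_esum do rewrite EFinD EFinM.
rewrite esumD => [|x _|x _]; last 2 first.
- by rewrite lee_fin.
- by rewrite -EFinM lee_fin mulr_ge0.
by rewrite ge0_esumZl // => x; rewrite lee_fin.
Qed.

End EsumNonneg.

Lemma max_ge0_intr {R : realType} (v : int) : 0 <= (Num.max v 0)%:~R :> R.
Proof. by rewrite ler0z le_max lexx orbT. Qed.

Lemma intr_max_decomp {R : realType} (v : int) :
  v%:~R = (Num.max v 0)%:~R - (Num.max (- v) 0)%:~R :> R.
Proof. by rewrite -intrB; congr intmul; lia. Qed.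

Section Drift.
Context {R : realType} {k0 : nat} {mu : int * int -> R}.
Hypothesis mu_ge0 : forall d, 0 <= mu d.
Hypothesis mu_sum1 : (\esum_(d in [set: int * int]) (mu d)%:E = 1)%E.
Hypothesis mu_supp :
  forall a b : int, (a < - k0%:Z \/ b < - k0%:Z) -> mu (a, b) = 0.

Lemma ler_mu_supp d (x y : R) :
  (- k0%:R <= d.1%:~R :> R -> - k0%:R <= d.2%:~R :> R -> x <= y) ->
  mu d * x <= mu d * y.
Proof.
case: d => a b /= xy.
have [ha|ha] := ltP a (- k0%:Z); first by rewrite mu_supp ?mul0r //; left.
have [hb|hb] := ltP b (- k0%:Z); first by rewrite mu_supp ?mul0r //; right.
by rewrite ler_wpM2l // xy // -[k0%:R]/(k0%:~R) -intrN ler_int.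
Qed.

Lemma mu_exp_moment2_of_kerZ {mu1 mu2 : nat -> int * int -> R}
    {mu12 : nat -> nat -> int * int -> R} {dl gm C : R} :
  0 <= dl ->
  (\esum_(z' in [set: nat * nat])
     (kerZ k0 mu mu1 mu2 mu12 (k0, k0) z' *
      expR (dl * (z'.1%:R - k0%:R) + gm * (z'.2%:R - k0%:R)))%:E <= C%:E)%E ->
  (\esum_(d in [set: int * int]) (mu d * expR (gm * d.2%:~R))%:E
   <= (expR (dl * k0%:R) * C)%:E)%E.
Proof.
move=> dl0 HC.
pose shift (z : nat * nat) : int * int := (z.1%:Z - k0%:Z, z.2%:Z - k0%:Z).
have shift_inj : set_inj [set: nat * nat] shift.
  by move=> [a b] [a' b'] _ _ [] /= h1 h2; congr pair; lia.
rewrite (esum_setT_supp (shift @` setT)); last first.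
  move=> [a b] out /=; rewrite mu_supp ?mul0r //.
  have [ha|ha] := ltP a (- k0%:Z); [by left | right].
  rewrite ltNge; apply/negP => hb; apply: out.
  by exists (absz (a + k0%:Z), absz (b + k0%:Z)) => //; rewrite /shift /=; congr pair; lia.
rewrite esum_image // EFinM.
have e0 : (0 <= (expR (dl * k0%:R))%:E)%E by rewrite lee_fin expR_ge0.
apply: le_trans (lee_wpmul2l e0 HC).
rewrite -ge0_esumZl ?expR_ge0 // => [|z]; last first.
  by rewrite lee_fin mulr_ge0 ?expR_ge0 // /kerZ /= leqnn.
apply: le_esum => z _; rewrite -EFinM lee_fin /kerZ /= leqnn mulrCA.
have shiftE (n : nat) : n%:R - k0%:R = (n%:Z - k0%:Z)%:~R :> R by rewrite intrB.
rewrite !shiftE.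
apply: (ler_mu_supp (shift z)) => /= h1 _.
by rewrite -expRD ler_expR; nra.
Qed.

Lemma mean2_lt0_gap : (mean2 mu < 0)%E -> exists mp mn : R, [/\ mp < mn,
  (\esum_(d in [set: int * int]) ((Num.max d.2 0)%:~R * mu d)%:E = mp%:E)%E &
  (\esum_(d in [set: int * int]) ((Num.max (- d.2) 0)%:~R * mu d)%:E = mn%:E)%E].
Proof.
rewrite /mean2; set mp := esum _ _; set mn := esum _ _.
have mp0 : (0 <= mp)%E by apply: esum_ge0 => d _; rewrite lee_fin mulr_ge0 ?max_ge0_intr.
have mn0 : (0 <= mn)%E by apply: esum_ge0 => d _; rewrite lee_fin mulr_ge0 ?max_ge0_intr.
have mn_le : (mn <= k0%:R%:E)%E.
  rewrite -[leRHS]mule1 -mu_sum1 -ge0_esumZl ?ler0n //.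
  apply: le_esum => d _; rewrite -EFinM lee_fin mulrC [_ * mu d]mulrC.
  apply: ler_mu_supp => _ h2; rewrite /Order.max; case: ifP => _; first by rewrite ler0n.
  by rewrite intrN; lra.
have mn_fin : mn \is a fin_num by rewrite ge0_fin_numE // (le_lt_trans mn_le) ?ltry.
rewrite suber_lt0 // => mp_lt.
have mp_fin : mp \is a fin_num.
  by rewrite ge0_fin_numE // (lt_trans mp_lt) // -ge0_fin_numE.
by exists (fine mp), (fine mn); rewrite -lte_fin !fineK.
Qed.

Lemma mu_expR_le_quadratic (gm t : R) d : 0 < gm -> 0 <= t -> t <= gm / 2 ->
  mu d * expR (t * d.2%:~R) + t * ((Num.max (- d.2) 0)%:~R * mu d)
  <= mu d + t * ((Num.max d.2 0)%:~R * mu d)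
     + t ^+ 2 * (8 / gm ^+ 2 * expR (2 * gm * k0%:R)) * (mu d * expR (gm * d.2%:~R)).
Proof.
move=> gm0 t0 tg.
have : mu d * expR (t * d.2%:~R) <= mu d * (1 + t * d.2%:~R
    + t ^+ 2 * (8 / gm ^+ 2 * expR (2 * gm * k0%:R)) * expR (gm * d.2%:~R)).
  by apply: ler_mu_supp => _ h2; apply: expR_le_quadratic_moment; rewrite ?ler0n.
by rewrite {2}intr_max_decomp; nra.
Qed.

Lemma exp_moment2_le_quadratic {gm M t mp mn : R} : 0 < gm -> 0 <= t -> t <= gm / 2 ->
  (\esum_(d in [set: int * int]) (mu d * expR (gm * d.2%:~R))%:E <= M%:E)%E ->
  (\esum_(d in [set: int * int]) ((Num.max d.2 0)%:~R * mu d)%:E = mp%:E)%E ->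
  (\esum_(d in [set: int * int]) ((Num.max (- d.2) 0)%:~R * mu d)%:E = mn%:E)%E ->
  (\esum_(d in [set: int * int]) (mu d * expR (t * d.2%:~R))%:E
   <= (1 - t * (mn - mp) + t ^+ 2 * (8 / gm ^+ 2 * expR (2 * gm * k0%:R)) * M)%:E)%E.
Proof.
move=> gm0 t0 tg HM mpE mnE; set K1 := 8 / gm ^+ 2 * _.
have K10 : 0 <= K1 by rewrite mulr_ge0 ?expR_ge0 // divr_ge0 // sqr_ge0.
have tK0 : 0 <= t ^+ 2 * K1 := mulr_ge0 (sqr_ge0 t) K10.
have vp0 d : 0 <= (Num.max d.2 0)%:~R * mu d by rewrite mulr_ge0 ?max_ge0_intr.
have vn0 d : 0 <= (Num.max (- d.2) 0)%:~R * mu d by rewrite mulr_ge0 ?max_ge0_intr.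
have e0 (s : R) d : 0 <= mu d * expR (s * d.2%:~R) := mulr_ge0 (mu_ge0 d) (expR_ge0 _).
have mvp0 d : 0 <= mu d + t * ((Num.max d.2 0)%:~R * mu d) :=
  addr_ge0 (mu_ge0 d) (mulr_ge0 t0 (vp0 d)).
have := le_esum (I := [set: int * int]) (fun d _ =>
  (mu_expR_le_quadratic _ _ d gm0 t0 tg : (_%:E <= _%:E)%E)).
rewrite (ge0_esumDZ _ _ _ _ t0 (e0 t) vn0) (ge0_esumDZ _ _ _ _ tK0 mvp0 (e0 gm)).
rewrite (ge0_esumDZ _ _ _ _ t0 mu_ge0 vp0) mu_sum1 mpE mnE => S.
have {}S := le_trans S (leeD2l _ (lee_wpmul2l (tK0 : (0 <= (t ^+ 2 * K1)%:E)%E) HM)).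
rewrite -!EFinM -!EFinD -leeBrDr // -EFinB in S.
by apply: le_trans S _; rewrite lee_fin; lra.
Qed.

Lemma exp_moment2_lt1 {gm M : R} : 0 < gm -> 0 < M -> (mean2 mu < 0)%E ->
  (\esum_(d in [set: int * int]) (mu d * expR (gm * d.2%:~R))%:E <= M%:E)%E ->
  exists t c : R, [/\ 0 < t, 0 < c &
    (\esum_(d in [set: int * int]) (mu d * expR (t * d.2%:~R))%:E <= (1 - c)%:E)%E].
Proof.
move=> gm0 M0 /mean2_lt0_gap[mp [mn [gap_gt0 mpE mnE]]] HM.
set K1 := 8 / gm ^+ 2 * expR (2 * gm * k0%:R).
have K10 : 0 < K1 by rewrite mulr_gt0 ?expR_gt0 // divr_gt0 // exprn_gt0.
have KM0 : 0 < 2 * (K1 * M) by apply: mulr_gt0 => //; exact: mulr_gt0.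
(* the quadratic error t^2 K1 M is then at most half the linear gain t (mn - mp) *)
set t := Num.min (gm / 2) ((mn - mp) / (2 * (K1 * M))).
have t0 : 0 < t.
  by rewrite lt_min; apply/andP; split; apply: divr_gt0; rewrite ?subr_gt0.
have tKM : t * (K1 * M) <= (mn - mp) / 2.
  have : t <= (mn - mp) / (2 * (K1 * M)) by rewrite ge_min lexx orbT.
  by rewrite ler_pdivlMr //; nra.
exists t, (t * (mn - mp) / 2); split; first exact: t0.
  by rewrite divr_gt0 ?mulr_gt0 ?subr_gt0.
apply: le_trans (exp_moment2_le_quadratic gm0 (ltW t0) _ HM mpE mnE) _.
  by rewrite ge_min lexx.
by rewrite lee_fin -/K1; nra.
Qed.

Lemma tilted_moment_le1 {t c : R} : (0 < k0)%N -> 0 < c ->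
  (\esum_(d in [set: int * int]) (mu d * expR (t * d.2%:~R))%:E <= (1 - c)%:E)%E ->
  (\esum_(d in [set: int * int])
     (mu d * expR (t * d.2%:~R - c / k0%:R * d.1%:~R))%:E <= 1)%E.
Proof.
move=> k0_gt0 c0 Hc; have k0R : 0 < k0%:R :> R by rewrite ltr0n.
have ec0 : (0 <= (expR c)%:E)%E by rewrite lee_fin expR_ge0.
apply: (@le_trans _ _ ((expR c)%:E * (1 - c)%:E)%E); last first.
  by rewrite -EFinM lee_fin -[leRHS](expRxMexpNx_1 c) ler_wpM2l ?expR_ge0 //;
    have := expR_ge1Dx (- c); lra.
apply: le_trans (lee_wpmul2l ec0 Hc).
rewrite -ge0_esumZl ?expR_ge0 // => [|d]; last by rewrite lee_fin mulr_ge0 ?expR_ge0.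
apply: le_esum => d _; rewrite -EFinM lee_fin mulrCA; apply: ler_mu_supp => h1 _.
rewrite expRD mulrC ler_wpM2r ?expR_ge0 // ler_expR.
have : c / k0%:R * (- k0%:R) <= c / k0%:R * d.1%:~R.
  by apply: ler_wpM2l => //; rewrite divr_ge0 // ltW.
by rewrite mulrN divfK ?gt_eqF //; lra.
Qed.

End Drift.

Section FirstPassage.
Context {R : realType} {p : nat * int -> nat * int -> R} {K : nat} {l : int}.
Context {G : nat * int -> R} {D : set (nat * int)}.
Hypothesis p_ge0 : forall z z', 0 <= p z z'.
Hypothesis G_ge0 : forall z, 0 <= G z.
Hypothesis G_ge1 : forall z, (z.1 <= K)%N -> z.2 = l -> 1 <= G z.
Hypothesis D_out : forall z, (K < z.1)%N -> D z.
Hypothesis G_super : forall z, D z ->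
  (\esum_(z' in [set: nat * int]) (p z z' * G z')%:E <= (G z)%:E)%E.

Lemma firstpass_ge0 n z : (0 <= firstpass p K l n z)%E.
Proof.
elim: n z => [|n IH] z /=; apply: esum_ge0 => z' _; first by rewrite lee_fin.
by rewrite mule_ge0 ?lee_fin.
Qed.

Lemma sum_firstpass_le N z : D z ->
  (\sum_(0 <= n < N) firstpass p K l n z <= (G z)%:E)%E.
Proof.
elim: N z => [|N IH] z Dz; first by rewrite big_geq // lee_fin.
rewrite big_nat_recl //= -esum_sum => [|z' n _ _]; last first.
  by rewrite mule_ge0 ?lee_fin ?firstpass_ge0.
apply: le_trans _ (G_super z Dz).
have pG0 z' : (0 <= (p z z' * G z')%:E)%E by rewrite lee_fin mulr_ge0.
have AB : [set z' : nat * int | (z'.1 <= K)%N /\ z'.2 = l]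
    `&` [set z' | (K < z'.1)%N] = set0.
  by apply/seteqP; split => // z' /= [[z'K _] Kz']; lia.
apply: le_trans _ (esum_disj_le _ _ _ pG0 AB).
apply: leeD; apply: le_esum => z'.
  by case=> z'K z'l; rewrite lee_fin ler_peMr // G_ge1.
move=> Kz'; rewrite -ge0_sume_distrr => [|n _]; last exact: firstpass_ge0.
by rewrite EFinM lee_wpmul2l ?lee_fin // IH //; apply: D_out.
Qed.

Lemma hitY_le_superharmonic z : D z -> (hitY p K l z <= (G z)%:E)%E.
Proof.
move=> Dz; rewrite /hitY -nneseries_esumT => [|n]; last exact: firstpass_ge0.
apply: lime_le; first by apply: is_cvg_nneseries => n _ _; exact: firstpass_ge0.
by apply: nearW => N; exact: sum_firstpass_le.
Qed.

End FirstPassage.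

Definition lyap {R : realType} (th et : R) (K : nat) (l : int) (z : nat * int) : R :=
  expR (th * (z.2%:~R - l%:~R) - et * (z.1%:R - K%:R)).

Lemma lyap_ge1 {R : realType} (th et : R) (K : nat) (l : int) z :
  0 <= et -> (z.1 <= K)%N -> z.2 = l -> 1 <= lyap th et K l z.
Proof.
move=> et0 zK zl; rewrite /lyap zl subrr mulr0 sub0r -[leLHS]expR0 ler_expR.
by rewrite oppr_ge0 mulr_ge0_le0 // subr_le0 ler_nat.
Qed.

Lemma kerZ1_lyap_superharmonic {R : realType} {k0 : nat} {mu : int * int -> R}
    (mu2 : nat -> int * int -> R) (th et : R) (K : nat) (l : int) z :
  (forall d, 0 <= mu d) ->
  (\esum_(d in [set: int * int])
     (mu d * expR (th * d.2%:~R - et * d.1%:~R))%:E <= 1)%E ->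
  (k0 <= z.1)%N ->
  (\esum_(z' in [set: nat * int]) (kerZ1 k0 mu mu2 z z' * lyap th et K l z')%:E
   <= (lyap th et K l z)%:E)%E.
Proof.
move=> mu_ge0 Htilt zk0.
pose jump (z' : nat * int) : int * int := (z'.1%:Z - z.1%:Z, z'.2 - z.2).
pose h (d : int * int) : R := mu d * expR (th * d.2%:~R - et * d.1%:~R).
have h0 d : 0 <= h d by rewrite mulr_ge0 ?expR_ge0.
have jump_inj : set_inj [set: nat * int] jump.
  move=> [a b] [a' b'] _ _ [] /= h1 h2.
  by congr pair; [apply/eqP; rewrite -eqz_nat; apply/eqP|]; lia.
have lyap_jump z' :
    kerZ1 k0 mu mu2 z z' * lyap th et K l z' = lyap th et K l z * h (jump z').
  rewrite /kerZ1 zk0 /h /jump /lyap /= mulrCA -expRD; congr (_ * expR _).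
  by rewrite !intrB; ring.
under eq_esum do rewrite lyap_jump EFinM.
rewrite ge0_esumZl ?expR_ge0 // => [|z']; last by rewrite lee_fin.
rewrite -[leRHS]mule1 lee_wpmul2l ?lee_fin ?expR_ge0 //.
rewrite -(esum_image _ jump (fun d => (h d)%:E)) //.
by apply: le_trans Htilt; apply: esum_le_setT => d; rewrite lee_fin.
Qed.

Theorem lemma5p6 (R : realType) (k0 : nat) (mu : int * int -> R)
  (mu1 mu2 : nat -> int * int -> R) (mu12 : nat -> nat -> int * int -> R) :
  (0 < k0)%N ->
  is_prob mu ->
  (forall j, (j < k0)%N -> is_prob (mu1 j)) ->
  (forall i, (i < k0)%N -> is_prob (mu2 i)) ->
  (forall i j, (i < k0)%N -> (j < k0)%N -> is_prob (mu12 i j)) ->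
  (* (A1) *)
  (forall a b : int, (a < - k0%:Z \/ b < - k0%:Z) -> mu (a, b) = 0) ->
  (forall (j : nat) (a b : int), (j < k0)%N ->
     (a < - k0%:Z \/ b < - j%:Z) -> mu1 j (a, b) = 0) ->
  (forall (i : nat) (a b : int), (i < k0)%N ->
     (b < - k0%:Z \/ a < - i%:Z) -> mu2 i (a, b) = 0) ->
  (forall (i j : nat) (a b : int), (i < k0)%N -> (j < k0)%N ->
     (a < - i%:Z \/ b < - j%:Z) -> mu12 i j (a, b) = 0) ->
  (* (A2) *)
  (exists (delta gamma C : R), 0 < delta /\ 0 < gamma /\ 0 < C /\
     forall z : nat * nat,
       (\esum_(z' in [set: nat * nat])
          (kerZ k0 mu mu1 mu2 mu12 z z' *
           expR (delta * (z'.1%:R - z.1%:R) + gamma * (z'.2%:R - z.2%:R)))%:E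
        <= C%:E)%E) ->
  (* (A3) *)
  irreducible (kerZ0 mu) ->
  irreducible (kerZ1 k0 mu mu2) ->
  irreducible (kerZ2 k0 mu mu1) ->
  irreducible (kerZ k0 mu mu1 mu2 mu12) ->
  (* m_2 < 0 *)
  (mean2 mu < 0)%E ->
  forall k : nat,
  exists (C theta theta' : R), 0 < C /\ 0 < theta /\ 0 < theta' /\
    forall (i : nat) (j l : int), (k0 <= i)%N ->
      (hitY (kerZ1 k0 mu mu2) (maxn k0.-1 k) l (i, j)
       <= (C * expR (- theta * (l - j)%:~R - theta' * i%:R))%:E)%E.
Proof.
move=> k0_gt0 [mu_ge0 mu_sum1] _ mu2_prob _ mu_supp _ _ _
  [dl [gm [C [dl0 [gm0 [C0 A2]]]]]] _ _ _ _ m2_lt0 k.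
have M2 := mu_exp_moment2_of_kerZ mu_ge0 mu_supp (ltW dl0) (A2 (k0, k0)).
have [t [c [t0 c0 Ht]]] := exp_moment2_lt1 mu_ge0 mu_sum1 mu_supp gm0
  (mulr_gt0 (expR_gt0 _) C0) m2_lt0 M2.
have Htilt := tilted_moment_le1 mu_ge0 mu_supp k0_gt0 c0 Ht.
set K := maxn k0.-1 k; set et := c / k0%:R.
have et0 : 0 < et by rewrite divr_gt0 ?ltr0n.
exists (expR (et * K%:R)), t, et; split; [exact: expR_gt0 | split => //; split => //].
move=> i j l ik0.
have kerZ1_ge0 z z' : 0 <= kerZ1 k0 mu mu2 z z'.
  by rewrite /kerZ1; case: ifPn; rewrite // -ltnNge => /mu2_prob[].
have lyap_ge0 z : 0 <= lyap t et K l z := expR_ge0 _.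
have lyap_ge1_target z : (z.1 <= K)%N -> z.2 = l -> 1 <= lyap t et K l z.
  exact/lyap_ge1/ltW.
have K_lt_k0 (z : nat * int) : (K < z.1)%N -> (k0 <= z.1)%N.
  by rewrite gtn_max => /andP[+ _]; rewrite -ltnS prednK.
have lyap_super (z : nat * int) : (k0 <= z.1)%N -> _ :=
  kerZ1_lyap_superharmonic mu2 t et K l z mu_ge0 Htilt.
apply: le_trans (hitY_le_superharmonic kerZ1_ge0 lyap_ge0 lyap_ge1_target K_lt_k0
  lyap_super (i, j) ik0) _.
by rewrite lee_fin /lyap -expRD ler_expR /= intrB; lra.
Qed.
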